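(* For every command $c$ and store $\sigma$ of the While-language: $(c,\sigma)\to^\infty$ if and only if $(c,\sigma)\Rightarrow^\infty$.
   Context: While-language syntax: variables $x$ range over a countably infinite set $\mathit{Var}$; $n$ ranges over natural numbers; values are $v ::= \mathsf{null}\mid n$ ($\mathsf{null}$ distinct from every natural number); expressions are $e ::= v\mid x\mid e_1\oplus e_2$ with $\oplus\in\{+,-,*\}$, where $\oplus(n_1,n_2)$ is the result of the operation on naturals; commands are $c ::= \mathsf{skip}\mid\mathsf{alloc}\ x\mid x:=e\mid c_1;c_2\mid \mathsf{if}\ e\ c_1\ c_2\mid\mathsf{while}\ e\ c$. A store $\sigma$ is a finite partial map from $\mathit{Var}$ to values, with domain $\mathrm{dom}(\sigma)$, lookup $\sigma(x)$, update $\sigma[x\mapsto v]$. Expression evaluation $(e,\sigma)\Rightarrow_E v$ is the least relation with: $(v,\sigma)\Rightarrow_E v$; $(x,\sigma)\Rightarrow_E\sigma(x)$ if $x\in\mathrm{dom}(\sigma)$; if $(e_1,\sigma)\Rightarrow_E n_1$ and $(e_2,\sigma)\Rightarrow_E n_2$ with $n_1,n_2$ naturals then $(e_1\oplus e_2,\sigma)\Rightarrow_E\oplus(n_1,n_2)$. Small-step relation $(c,\sigma)\to(c',\sigma')$ is the least relation with: $(\mathsf{alloc}\ x,\sigma)\to(\mathsf{skip},\sigma[x\mapsto\mathsf{null}])$ if $x\notin\mathrm{dom}(\sigma)$; $(x:=e,\sigma)\to(\mathsf{skip},\sigma[x\mapsto v])$ if $x\in\mathrm{dom}(\sigma)$ and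 $(e,\sigma)\Rightarrow_E v$; $(c_1;c_2,\sigma)\to(c_1';c_2,\sigma')$ if $(c_1,\sigma)\to(c_1',\sigma')$; $(\mathsf{skip};c_2,\sigma)\to(c_2,\sigma)$; $(\mathsf{if}\ e\ c_1\ c_2,\sigma)\to(c_1,\sigma)$ if $(e,\sigma)\Rightarrow_E v$, $v\neq 0$; $(\mathsf{if}\ e\ c_1\ c_2,\sigma)\to(c_2,\sigma)$ if $(e,\sigma)\Rightarrow_E 0$; $(\mathsf{while}\ e\ c,\sigma)\to(c;\mathsf{while}\ e\ c,\sigma)$ if $(e,\sigma)\Rightarrow_E v$, $v\neq0$; $(\mathsf{while}\ e\ c,\sigma)\to(\mathsf{skip},\sigma)$ if $(e,\sigma)\Rightarrow_E 0$. The predicate $(c,\sigma)\to^\infty$ is coinductively defined (greatest predicate) by the single rule: if $(c,\sigma)\to(c',\sigma')$ and $(c',\sigma')\to^\infty$ then $(c,\sigma)\to^\infty$; i.e. it holds exactly when there is an infinite sequence of transitions from $(c,\sigma)$. Big-step relation $(c,\sigma)\Rightarrow_B\sigma'$ is the least relation with: $(\mathsf{skip},\sigma)\Rightarrow_B\sigma$; $(\mathsf{alloc}\ x,\sigma)\Rightarrow_B\sigma[x\mapsto\mathsf{null}]$ if $x\notin\mathrm{dom}(\sigma)$; $(x:=e,\sigma)\Rightarrow_B\sigma[x\mapsto v]$ if $x\in\mathrm{dom}(\sigma)$ and $(e,\sigma)\Rightarrow_E v$; $(c_1;c_2,\sigma)\Rightarrow_B\sigma''$ if $(c_1,\sigma)\Rightarrow_B\sigma'$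 and $(c_2,\sigma')\Rightarrow_B\sigma''$; $(\mathsf{if}\ e\ c_1\ c_2,\sigma)\Rightarrow_B\sigma'$ if $(e,\sigma)\Rightarrow_E v$, $v\ne0$, $(c_1,\sigma)\Rightarrow_B\sigma'$; $(\mathsf{if}\ e\ c_1\ c_2,\sigma)\Rightarrow_B\sigma'$ if $(e,\sigma)\Rightarrow_E0$, $(c_2,\sigma)\Rightarrow_B\sigma'$; $(\mathsf{while}\ e\ c,\sigma)\Rightarrow_B\sigma''$ if $(e,\sigma)\Rightarrow_E v$, $v\ne0$, $(c,\sigma)\Rightarrow_B\sigma'$, $(\mathsf{while}\ e\ c,\sigma')\Rightarrow_B\sigma''$; $(\mathsf{while}\ e\ c,\sigma)\Rightarrow_B\sigma$ if $(e,\sigma)\Rightarrow_E0$. The big-step divergence predicate $(c,\sigma)\Rightarrow^\infty$ is the greatest predicate such that every element is the conclusion of an instance of one of these rules whose $\Rightarrow^\infty$-premises are in it: (D-Seq1) $(c_1,\sigma)\Rightarrow^\infty$ gives $(c_1;c_2,\sigma)\Rightarrow^\infty$; (D-Seq2) $(c_1,\sigma)\Rightarrow_B\sigma'$ and $(c_2,\sigma')\Rightarrow^\infty$ give $(c_1;c_2,\sigma)\Rightarrow^\infty$; (D-If) $(e,\sigma)\Rightarrow_E v$, $v\ne0$, $(c_1,\sigma)\Rightarrow^\infty$ give $(\mathsf{if}\ e\ c_1\ c_2,\sigma)\Rightarrow^\infty$; (D-IfZ) $(e,\sigma)\Rightarrow_E0$, $(c_2,\sigma)\Rightarrow^\infty$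 give $(\mathsf{if}\ e\ c_1\ c_2,\sigma)\Rightarrow^\infty$; (D-WhileBody) $(e,\sigma)\Rightarrow_E v$, $v\ne0$, $(c,\sigma)\Rightarrow^\infty$ give $(\mathsf{while}\ e\ c,\sigma)\Rightarrow^\infty$; (D-While) $(e,\sigma)\Rightarrow_E v$, $v\ne0$, $(c,\sigma)\Rightarrow_B\sigma'$, $(\mathsf{while}\ e\ c,\sigma')\Rightarrow^\infty$ give $(\mathsf{while}\ e\ c,\sigma)\Rightarrow^\infty$. *)

From Stdlib Require Import Arith List.
Import ListNotations.

Definition var := nat.

Inductive val : Type := Vnull | Vnat (n : nat).

Inductive binop : Type := Oplus | Ominus | Omult.

Definition eval_op (o : binop) (n1 n2 : nat) : nat :=
  match o with Oplus => n1 + n2 | Ominus => n1 - n2 | Omult => n1 * n2 end.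

Inductive expr : Type :=
| Eval (v : val)
| Evar (x : var)
| Eop (o : binop) (e1 e2 : expr).

Inductive cmd : Type :=
| Cskip
| Calloc (x : var)
| Cassign (x : var) (e : expr)
| Cseq (c1 c2 : cmd)
| Cif (e : expr) (c1 c2 : cmd)
| Cwhile (e : expr) (c : cmd).

(* A store is a finite partial map, represented by an association list;
   lookup returns the most recent binding. *)
Definition store := list (var * val).

Fixpoint lookup (s : store) (x : var) : option val :=
  match s with
  | [] => None
  | (y, v) :: s' => if Nat.eqb x y then Some v else lookup s' x
  end.

Definition in_dom (s : store) (x : var) : Prop := lookup s x <> None.

Definition update (s : store) (x : var) (v : val) : store := (x, v) :: s.

Inductive eval_expr : expr -> store -> val -> Prop :=
| E_Val : forall v s, eval_expr (Eval v) s v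
| E_Var : forall x s v, lookup s x = Some v -> eval_expr (Evar x) s v
| E_Op : forall o e1 e2 s n1 n2,
    eval_expr e1 s (Vnat n1) -> eval_expr e2 s (Vnat n2) ->
    eval_expr (Eop o e1 e2) s (Vnat (eval_op o n1 n2)).

Inductive step : cmd -> store -> cmd -> store -> Prop :=
| S_Alloc : forall x s, ~ in_dom s x ->
    step (Calloc x) s Cskip (update s x Vnull)
| S_Assign : forall x e s v, in_dom s x -> eval_expr e s v ->
    step (Cassign x e) s Cskip (update s x v)
| S_Seq : forall c1 c1' c2 s s', step c1 s c1' s' ->
    step (Cseq c1 c2) s (Cseq c1' c2) s'
| S_SeqSkip : forall c2 s, step (Cseq Cskip c2) s c2 s
| S_IfT : forall e c1 c2 s v, eval_expr e s v -> v <> Vnat 0 ->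
    step (Cif e c1 c2) s c1 s
| S_IfF : forall e c1 c2 s, eval_expr e s (Vnat 0) ->
    step (Cif e c1 c2) s c2 s
| S_WhileT : forall e c s v, eval_expr e s v -> v <> Vnat 0 ->
    step (Cwhile e c) s (Cseq c (Cwhile e c)) s
| S_WhileF : forall e c s, eval_expr e s (Vnat 0) ->
    step (Cwhile e c) s Cskip s.

CoInductive diverges : cmd -> store -> Prop :=
| Div_step : forall c s c' s', step c s c' s' -> diverges c' s' -> diverges c s.

Inductive bigstep : cmd -> store -> store -> Prop :=
| B_Skip : forall s, bigstep Cskip s s
| B_Alloc : forall x s, ~ in_dom s x -> bigstep (Calloc x) s (update s x Vnull)
| B_Assign : forall x e s v, in_dom s x -> eval_expr e s v ->
    bigstep (Cassign x e) s (update s x v)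
| B_Seq : forall c1 c2 s s' s'', bigstep c1 s s' -> bigstep c2 s' s'' ->
    bigstep (Cseq c1 c2) s s''
| B_IfT : forall e c1 c2 s s' v, eval_expr e s v -> v <> Vnat 0 ->
    bigstep c1 s s' -> bigstep (Cif e c1 c2) s s'
| B_IfF : forall e c1 c2 s s', eval_expr e s (Vnat 0) ->
    bigstep c2 s s' -> bigstep (Cif e c1 c2) s s'
| B_WhileT : forall e c s s' s'' v, eval_expr e s v -> v <> Vnat 0 ->
    bigstep c s s' -> bigstep (Cwhile e c) s' s'' -> bigstep (Cwhile e c) s s''
| B_WhileF : forall e c s, eval_expr e s (Vnat 0) -> bigstep (Cwhile e c) s s.

CoInductive bigdiv : cmd -> store -> Prop :=
| D_Seq1 : forall c1 c2 s, bigdiv c1 s -> bigdiv (Cseq c1 c2) s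
| D_Seq2 : forall c1 c2 s s', bigstep c1 s s' -> bigdiv c2 s' -> bigdiv (Cseq c1 c2) s
| D_If : forall e c1 c2 s v, eval_expr e s v -> v <> Vnat 0 ->
    bigdiv c1 s -> bigdiv (Cif e c1 c2) s
| D_IfZ : forall e c1 c2 s, eval_expr e s (Vnat 0) ->
    bigdiv c2 s -> bigdiv (Cif e c1 c2) s
| D_WhileBody : forall e c s v, eval_expr e s v -> v <> Vnat 0 ->
    bigdiv c s -> bigdiv (Cwhile e c) s
| D_While : forall e c s s' v, eval_expr e s v -> v <> Vnat 0 ->
    bigstep c s s' -> bigdiv (Cwhile e c) s' -> bigdiv (Cwhile e c) s.

(** Small-step divergence implies big-step divergence by coinduction on the
    first step. The only non-local case is a sequence [c1; c2]: classically,
    either [c1] runs to [skip] in a state from which [c2] diverges (rule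
    D-Seq2), or it does not, and then the infinite run of [c1; c2] never
    leaves its left component, so [c1] diverges (rule D-Seq1).
    Conversely, every configuration that diverges in the big-step sense can
    take a small step to another such configuration; this uses that a
    terminating command other than [skip] can take a step that preserves its
    final store. Iterating such steps yields an infinite run. *)

From Stdlib Require Import Classical.

Inductive star : cmd -> store -> cmd -> store -> Prop :=
| star_refl : forall c s, star c s c s
| star_step : forall c s c' s' c'' s'',
    step c s c' s' -> star c' s' c'' s'' -> star c s c'' s''.

Lemma step_bigstep : forall c s c' s' s'',
  step c s c' s' -> bigstep c' s' s'' -> bigstep c s s''.
Proof.
  intros c s c' s' s'' Hstep; revert s''.
  induction Hstep; intros s'' Hbig.
  - inversion Hbig; subst. now constructor.
  - inversion Hbig; subst. now econstructor.
  - inversion Hbig; subst. econstructor; eauto.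
  - econstructor; [constructor | exact Hbig].
  - eapply B_IfT; eauto.
  - eapply B_IfF; eauto.
  - inversion Hbig; subst. eapply B_WhileT; eauto.
  - inversion Hbig; subst. now apply B_WhileF.
Qed.

Lemma star_skip_bigstep : forall c s s', star c s Cskip s' -> bigstep c s s'.
Proof.
  intros c s s' Hstar. remember Cskip as skip eqn:Eskip.
  induction Hstar; subst.
  - constructor.
  - eapply step_bigstep; eauto.
Qed.

Lemma skip_not_diverges : forall s, ~ diverges Cskip s.
Proof. intros s Hdiv. inversion Hdiv as [? ? ? ? Hstep _]. inversion Hstep. Qed.

Lemma diverges_seq_left : forall c1 c2 s,
  diverges (Cseq c1 c2) s ->
  ~ (exists s', star c1 s Cskip s' /\ diverges c2 s') ->
  diverges c1 s.
Proof.
  cofix CIH. intros c1 c2 s Hdiv Hnot_finish.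
  inversion Hdiv as [? ? c' s' Hstep Hdiv']; subst.
  inversion Hstep; subst.
  - eapply Div_step; [eassumption |].
    eapply CIH; [eassumption |].
    intros [s'' [Hstar Hdiv2]]. apply Hnot_finish.
    exists s''. split; [econstructor |]; eassumption.
  - exfalso. apply Hnot_finish. exists s'. split; [constructor | assumption].
Qed.

Lemma diverges_seq_inv : forall c1 c2 s,
  diverges (Cseq c1 c2) s ->
  diverges c1 s \/ exists s', bigstep c1 s s' /\ diverges c2 s'.
Proof.
  intros c1 c2 s Hdiv.
  destruct (classic (exists s', star c1 s Cskip s' /\ diverges c2 s'))
    as [[s' [Hstar Hdiv2]] | Hnot_finish].
  - right. exists s'. split; [apply star_skip_bigstep |]; assumption.
  - left. eapply diverges_seq_left; eassumption.
Qed.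

Lemma diverges_bigdiv : forall c s, diverges c s -> bigdiv c s.
Proof.
  cofix CIH. intros c s Hdiv.
  destruct c as [| x | x e | c1 c2 | e c1 c2 | e body].
  - exfalso. eapply skip_not_diverges; eassumption.
  - exfalso. inversion Hdiv as [? ? ? ? Hstep Hdiv']; subst.
    inversion Hstep; subst. eapply skip_not_diverges; eassumption.
  - exfalso. inversion Hdiv as [? ? ? ? Hstep Hdiv']; subst.
    inversion Hstep; subst. eapply skip_not_diverges; eassumption.
  - destruct (diverges_seq_inv _ _ _ Hdiv) as [Hdiv1 | [s' [Hbig Hdiv2]]].
    + apply D_Seq1, CIH, Hdiv1.
    + eapply D_Seq2; [exact Hbig | apply CIH, Hdiv2].
  - inversion Hdiv as [? ? ? ? Hstep Hdiv']; subst.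
    inversion Hstep; subst.
    + eapply D_If; [eassumption.. | apply CIH, Hdiv'].
    + eapply D_IfZ; [eassumption | apply CIH, Hdiv'].
  - inversion Hdiv as [? ? ? ? Hstep Hdiv']; subst.
    inversion Hstep; subst.
    + destruct (diverges_seq_inv _ _ _ Hdiv') as [Hdiv1 | [s1 [Hbig Hdiv2]]].
      * eapply D_WhileBody; [eassumption.. | apply CIH, Hdiv1].
      * eapply D_While; [eassumption.. | apply CIH, Hdiv2].
    + exfalso. eapply skip_not_diverges; eassumption.
Qed.

Lemma bigstep_skip_or_step : forall c s s', bigstep c s s' ->
  c = Cskip \/ exists c1 s1, step c s c1 s1 /\ bigstep c1 s1 s'.
Proof.
  intros c s s' Hbig. induction Hbig.
  - now left.
  - right. do 2 eexists. split; constructor; assumption.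
  - right. do 2 eexists. split; [econstructor; eassumption | constructor].
  - right. destruct IHHbig1 as [-> | [c1' [s1 [Hstep Hbig1']]]].
    + inversion Hbig1; subst.
      do 2 eexists. split; [apply S_SeqSkip | exact Hbig2].
    + do 2 eexists. split; econstructor; eassumption.
  - right. do 2 eexists. split; [eapply S_IfT |]; eassumption.
  - right. do 2 eexists. split; [eapply S_IfF |]; eassumption.
  - right. do 2 eexists. split; [eapply S_WhileT | econstructor]; eassumption.
  - right. do 2 eexists. split; [eapply S_WhileF; eassumption | constructor].
Qed.

Lemma bigdiv_step : forall c s, bigdiv c s ->
  exists c' s', step c s c' s' /\ bigdiv c' s'.
Proof.
  induction c as [| | | c1 IHc1 c2 _ | | e body _]; intros s Hdiv;
    inversion Hdiv; subst.
  - destruct (IHc1 s) as [c1' [s1 [Hstep Hdiv1]]]; [assumption |].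
    do 2 eexists. split; [econstructor; eassumption | now apply D_Seq1].
  - match goal with Hbig : bigstep c1 s _ |- _ =>
      destruct (bigstep_skip_or_step _ _ _ Hbig) as [-> | [c1' [s1 [Hstep Hbig1]]]]
    end.
    + match goal with Hbig : bigstep Cskip s _ |- _ => inversion Hbig; subst end.
      do 2 eexists. split; [apply S_SeqSkip | eassumption].
    + do 2 eexists. split; [econstructor; eassumption | eapply D_Seq2; eassumption].
  - do 2 eexists. split; [eapply S_IfT |]; eassumption.
  - do 2 eexists. split; [eapply S_IfF |]; eassumption.
  - do 2 eexists. split; [eapply S_WhileT; eassumption | now apply D_Seq1].
  - do 2 eexists. split; [eapply S_WhileT; eassumption | eapply D_Seq2; eassumption].
Qed.

Lemma progressive_diverges : forall P : cmd -> store -> Prop,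
  (forall c s, P c s -> exists c' s', step c s c' s' /\ P c' s') ->
  forall c s, P c s -> diverges c s.
Proof.
  intros P Hprogress. cofix CIH. intros c s HP.
  destruct (Hprogress c s HP) as [c' [s' [Hstep HP']]].
  eapply Div_step; [exact Hstep | apply CIH, HP'].
Qed.

Theorem theorem5 : forall (c : cmd) (s : store), diverges c s <-> bigdiv c s.
Proof.
  intros c s. split.
  - apply diverges_bigdiv.
  - apply progressive_diverges, bigdiv_step.
Qed.
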